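(* Let $G$ be a finite group. If $o(G)<o(S_3)=\frac{13}{6}$, then $G$ is an elementary abelian $2$-group. Moreover, if $o(G)=\frac{13}{6}$, then $G\cong S_3$.
   Context: For a finite group $G$, $|x|$ denotes the order of an element $x$, $\psi(G)=\sum_{x\in G}|x|$, and $o(G)=\psi(G)/|G|$ (the average element order). $S_3$ is the symmetric group of degree $3$. *)

From mathcomp Require Import all_boot all_order all_algebra all_fingroup all_solvable.
Set Implicit Arguments. Unset Strict Implicit. Unset Printing Implicit Defensive.
Import GRing.Theory Num.Theory.

Definition psi (gT : finGroupType) (G : {set gT}) : nat :=
  (\sum_(x in G) #[x]%g)%N.

Definition avg_order (gT : finGroupType) (G : {set gT}) : rat :=
  ((psi G)%:R / (#|G|)%:R)%R.

From mathcomp Require Import all_boot all_order all_algebra all_fingroup all_solvable.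
From mathcomp Require Import zify.
Set Implicit Arguments. Unset Strict Implicit. Unset Printing Implicit Defensive.

(* Write n = |G|, m and k for the numbers of elements of order > 2 and > 3.
   Counting element by element, psi(G) >= 2n + m + k - 1, with equality when all
   orders are at most 4.  If G is not an elementary abelian 2-group, then m > 0,
   m is even (inversion pairs these elements off), and n <= 4m: if more than 3/4
   of G squares to 1, then for every g more than half of the y in G have y and
   g y both squaring to 1; for g an involution such y commute with g, so g is
   central, and then every g = (g y) y^-1 squares to 1.  Finally m = 2, k = 0
   forces an element of order 3, so 3 | n.  These give 6 psi(G) >= 13 n, with
   equality only for n = 6, m = 2, k = 0; such a G has three involutions, two
   of which generate it as the dihedral group of order 6, that is S_3. *)

Local Open Scope group_scope.

Definition elts_order_gt (gT : finGroupType) (k : nat) (G : {set gT}) :=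
  [set x in G | k < #[x]]%N.

Lemma sum_nat_indicator (T : finType) (A : {pred T}) (P : pred T) :
  (\sum_(x in A) (P x : nat) = #|[set x in A | P x]|)%N.
Proof. by rewrite -big_mkcondr sum1_card cardsE. Qed.

Lemma order_le2 (gT : finGroupType) (x : gT) : (#[x] <= 2)%N = (x ^+ 2 == 1).
Proof.
rewrite -order_dvdn; apply/idP/idP => [|/dvdn_leq-> //].
by have := order_gt0 x; case: #[x] => [|[|[|]]].
Qed.

Lemma commute_of_sq1 (gT : finGroupType) (x y : gT) :
  x ^+ 2 = 1 -> y ^+ 2 = 1 -> (x * y) ^+ 2 = 1 -> commute x y.
Proof.
have invE (z : gT) : z ^+ 2 = 1 -> z^-1 = z.
  by move=> z2; apply/eqP; rewrite eq_invg_mul -expg2 z2.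
by move=> x2 y2 xy2; rewrite /commute -{1}(invE _ xy2) invMg (invE _ x2) (invE _ y2).
Qed.

Lemma even_card_inv_free (gT : finGroupType) (A : {set gT}) :
  {in A, forall x, x^-1 \in A /\ x^-1 != x} -> ~~ odd #|A|.
Proof.
elim: {A}_.+1 {-2}A (ltnSn #|A|) => // n IHn A ltAn invA.
have [-> | [x Ax]] := set_0Vmem A; first by rewrite cards0.
have [Axi xi_x] := invA x Ax.
have Axxi : x^-1 \in A :\ x by rewrite !inE xi_x.
set B := A :\ x :\ x^-1.
have invB : {in B, forall y, y^-1 \in B /\ y^-1 != y}.
  move=> y; rewrite !inE => /and3P[y_xi y_x Ay]; have [-> yi_y] := invA y Ay.
  by rewrite (inj_eq invg_inj) y_x eq_invg_sym y_xi.
rewrite (cardsD1 x) Ax (cardsD1 x^-1) Axxi /= in ltAn *.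
by rewrite negbK; apply: IHn invB; rewrite -ltnS ltnW.
Qed.

Lemma order_count_leqif (gT : finGroupType) (x : gT) :
  (2 + (2 < #[x]) + (3 < #[x]) <= #[x] + (x == 1%g) ?= iff (#[x] <= 4))%N.
Proof.
have [-> | ] := eqVneq x 1; first by rewrite order1.
by rewrite -order_gt1; case: #[x] => [|[|[|[|[|[|n]]]]]].
Qed.

Lemma subgroup_eq_of_card_gt_half (gT : finGroupType) (H G : {group gT}) :
  H \subset G -> (#|G| < 2 * #|H|)%N -> H :=: G.
Proof.
move=> sHG ltG; apply: (index1g sHG).
have := Lagrange sHG; have := indexg_gt0 G H.
by case: #|G : H| => [|[|n]] // _ eqG; move: ltG; rewrite -eqG; nia.
Qed.

Lemma abelem2_of_card_sqrt1 (gT : finGroupType) (G : {group gT}) :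
  (3 * #|G| < 4 * #|[set x in G | x ^+ 2 == 1%g]|)%N -> 2.-abelem G.
Proof.
set I := [set x in G | x ^+ 2 == 1%g] => ltG.
have sIG : I \subset G by apply/subsetP => x; rewrite inE => /andP[].
have many_sq1_pairs g : g \in G -> (#|G| < 2 * #|I :&: g^-1 *: I|)%N.
  move=> Gg; have sIgG : I :|: g^-1 *: I \subset G.
    rewrite subUset sIG; apply/subsetP => y; rewrite mem_lcoset invgK.
    by rewrite -(groupMl _ Gg) => /(subsetP sIG).
  have := cardsUI I (g^-1 *: I); rewrite card_lcoset.
  (* [lia] compares atoms syntactically, and these cardinals differ in the
     (convertible) instance paths of their sets: generalize them first. *)
  move: (subset_leq_card sIgG) ltG; move: #|_ :|: _| #|_ :&: _| #|I| #|G|; lia.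
have centI x g : x \in I -> g \in G -> commute x g.
  rewrite inE => /andP[Gx /eqP x2] Gg.
  suff /eqP : 'C_G[x] == G :> {set gT}.
    by move/setP/(_ g); rewrite inE Gg => /cent1P/esym.
  rewrite (subgroup_eq_of_card_gt_half (subsetIl G _)) //.
  apply: leq_trans (many_sq1_pairs x Gx) _; rewrite leq_pmul2l //; apply: subset_leq_card.
  apply/subsetP => y /setIP[/setIdP[Gy /eqP y2]].
  rewrite mem_lcoset invgK => /setIdP[_ /eqP xy2].
  by apply/setIP; split=> //; apply/cent1P/esym/commute_of_sq1.
apply: exponent2_abelem; apply/exponentP => g Gg.
have [y] : exists y, y \in I :&: g^-1 *: I.
  by apply/card_gt0P; move: (many_sq1_pairs g Gg); case: #|_ :&: _|.
move=> /setIP[Iy]; rewrite mem_lcoset invgK => /setIdP[_ /eqP gy2].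
have /setIdP[_ /eqP y2] := Iy.
by rewrite -gy2 expgMn ?y2 ?mulg1 //; apply/esym/centI.
Qed.

Lemma isog_D6_of_involutions (gT : finGroupType) (G : {group gT}) (a b : gT) :
    #|G| = 6%N -> a \in G -> b \in G -> #[a] = 2%N -> #[b] = 2%N -> a != b ->
  G \isog 'D_6.
Proof.
move=> oG Ga Gb oa ob ab; set H := <<[set a; b]>>.
have sHG : H \subset G by rewrite gen_subG subUset !sub1set Ga Gb.
have Ha : a \in H by rewrite mem_gen ?set21.
have Hb : b \in H by rewrite mem_gen ?set22.
have oH : #|H| = 6%N.
  have dvdH6 : #|H| %| 6 by rewrite -oG cardSg.
  have even_H : 2 %| #|H| by rewrite -oa order_dvdG.
  have ge3_H : (3 <= #|H|)%N.
    have : 1 |: [set a; b] \subset H by rewrite !subUset !sub1set group1 Ha Hb.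
    move/subset_leq_card; rewrite cardsU1 cards2 ab !inE negb_or.
    by rewrite (eq_sym 1 a) (eq_sym 1 b) -!order_eq1 oa ob.
  have := dvdn_leq (isT : 0 < 6)%N dvdH6.
  by move: dvdH6 even_H ge3_H; case: #|H| => [|[|[|[|[|[|[|n]]]]]]].
have <- : H = G :> {set gT} by apply/eqP; rewrite eqEcard sHG oG oH.
by move: (involutions_gen_dihedral oa ob ab); rewrite -/H oH.
Qed.

Section ElementOrders.

Variables (gT : finGroupType) (G : {group gT}).

Local Notation M := (elts_order_gt 2 G).
Local Notation K := (elts_order_gt 3 G).

Lemma psi_leqif :
  (2 * #|G| + #|M| + #|K| <= (psi G).+1 ?= iff [forall x in G, #[x] <= 4])%N.
Proof.
have -> : (2 * #|G| + #|M| + #|K| = \sum_(x in G) (2 + (2 < #[x]) + (3 < #[x])))%N.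
  by rewrite !big_split /= !sum_nat_indicator sum_nat_const mulnC.
have -> : ((psi G).+1 = \sum_(x in G) (#[x] + (x == 1%g)))%N.
  rewrite big_split /= sum_nat_indicator -addn1 /psi; congr (_ + _).
  rewrite -(cards1 (1 : gT)); apply: eq_card => x.
  by rewrite !inE andb_idl // => /eqP->.
exact: leqif_sum (fun x _ => order_count_leqif x).
Qed.

Lemma card_elts_order_gt2_sqrt1 :
  (#|M| + #|[set x in G | x ^+ 2 == 1%g]| = #|G|)%N.
Proof.
rewrite -(cardsID M G) (setIidPr _); last by apply/subsetP => x /setIdP[].
congr (_ + _); apply: eq_card => x; rewrite /elts_order_gt.
by rewrite !inE -order_le2 ltnNge; case: (_ \in _); case: (_ <= _).
Qed.

Lemma abelem2E : 2.-abelem G = (M == set0).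
Proof.
apply/idP/eqP => [abG | M0].
  have [_ sq1] := abelemP (isT : prime 2) abG.
  apply/setP => x; rewrite /elts_order_gt !inE; apply/negbTE/andP => -[Gx].
  by rewrite ltnNge order_le2 sq1 ?eqxx.
apply: exponent2_abelem; apply/exponentP => x Gx; apply/eqP.
rewrite -order_le2 leqNgt; apply/negP => lt2x.
by have := in_set0 x; rewrite -M0 inE Gx lt2x.
Qed.

Lemma elts_order_gtS k l : (k <= l)%N -> elts_order_gt l G \subset elts_order_gt k G.
Proof.
by move=> le_kl; apply/subsetP => x /setIdP[Gx lt_lx]; rewrite inE Gx (leq_ltn_trans le_kl).
Qed.

Lemma even_card_elts_order_gt2 : ~~ odd #|M|.
Proof.
apply: even_card_inv_free => x /setIdP[Gx lt2x].
rewrite !inE groupV Gx orderV lt2x; split=> //.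
by apply: contraL lt2x => /eqP xi_x; rewrite -leqNgt order_le2 expg2 -{1}xi_x mulVg.
Qed.

Lemma psi_abelem2 : 2.-abelem G -> ((psi G).+1 = 2 * #|G|)%N.
Proof.
rewrite abelem2E => /eqP M0.
have K0 : K = set0 by apply/eqP; rewrite -subset0 -M0 elts_order_gtS.
have le4 : [forall x in G, #[x] <= 4]%N.
  apply/forall_inP => x Gx; apply: (@leq_trans 2) => //.
  by rewrite leqNgt; apply/negP => lt2x; have := in_set0 x; rewrite -M0 inE Gx lt2x.
by move: (eq_leqif psi_leqif); rewrite le4 M0 K0 !cards0 !addn0 => /eqP.
Qed.

Lemma psi_nonabelem2 : ~~ 2.-abelem G ->
  (13 * #|G| <= 6 * psi G)%N /\
  (13 * #|G| = 6 * psi G -> [/\ #|G| = 6, #|M| = 2 & #|K| = 0])%N.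
Proof.
move=> nabG.
have M_gt0 : (0 < #|M|)%N by rewrite card_gt0 -abelem2E.
have even_M := even_card_elts_order_gt2.
have G_le : (#|G| <= 4 * #|M|)%N.
  have := contra (@abelem2_of_card_sqrt1 _ G) nabG.
  have := card_elts_order_gt2_sqrt1; rewrite -leqNgt; lia.
have K_le : (#|K| <= #|M|)%N by apply/subset_leq_card/elts_order_gtS.
have dvd3 : #|M| = 2%N -> #|K| = 0%N -> 3 %| #|G|.
  move=> M2 /eqP; rewrite cards_eq0 => /eqP K0.
  have [x /setIdP[Gx lt2x]] : exists x, x \in M by apply/card_gt0P; rewrite M2.
  have : x \notin K by rewrite K0 inE.
  rewrite inE Gx -leqNgt => le3x.
  have -> : 3 = #[x] by apply/eqP; rewrite eqn_leq le3x andbT.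
  exact: order_dvdG.
have psi_ge := psi_leqif.1.
split=> [|eq_psi]; first lia.
by split; lia.
Qed.

End ElementOrders.

Lemma order_tperm (T : finType) (x y : T) : x != y -> #[tperm x y] = 2%N.
Proof.
move=> xy; apply/eqP; rewrite eqn_leq order_le2 expg2 tperm2 eqxx order_gt1 /=.
by apply: contra_neq xy => /(congr1 (fun s : {perm T} => s x)); rewrite tpermL perm1.
Qed.

Section SymmetricGroup3.

Let i1 : 'I_3 := Ordinal (isT : 1 < 3)%N.
Let s01 : 'S_3 := tperm ord0 i1.
Let s12 : 'S_3 := tperm i1 ord_max.

Lemma card_S3 : #|[set: 'S_3]| = 6%N.
Proof. by rewrite cardsT card_Sn. Qed.

Lemma S3_isog_D6 : [set: 'S_3] \isog 'D_6.
Proof.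
apply: (@isog_D6_of_involutions _ [set: 'S_3]%G s01 s12 card_S3);
  rewrite ?inE ?order_tperm //.
by apply/eqP => /(congr1 (fun s : 'S_3 => s ord0)); rewrite tpermL tpermD.
Qed.

Lemma S3_nonabelian : ~~ abelian [set: 'S_3].
Proof.
apply/negP => /centsP/(_ s01 (in_setT _) s12 (in_setT _)).
move/(congr1 (fun s : 'S_3 => s ord0)).
by rewrite !permM (tpermL ord0) tpermL (@tpermD _ i1) // tpermL.
Qed.

Lemma order_S3_le3 (x : 'S_3) : (#[x] <= 3)%N.
Proof.
have dvdx6 : #[x] %| 6 by rewrite -card_S3 order_dvdG ?inE.
have ox_neq6 : #[x] != 6%N.
  apply: contraNneq S3_nonabelian => ox6.
  have <- : <[x]> = [set: 'S_3] by apply/eqP; rewrite eqEcard subsetT card_S3 -orderE ox6.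
  exact: cycle_abelian.
have := dvdn_leq (isT : 0 < 6)%N dvdx6.
by move: dvdx6 ox_neq6; case: #[x] => [|[|[|[|[|[|[|n]]]]]]].
Qed.

Lemma card_elts_order_gt2_S3 : #|elts_order_gt 2 [set: 'S_3]| = 2%N.
Proof.
have M_gt0 : (0 < #|elts_order_gt 2 [set: 'S_3]|)%N.
  rewrite card_gt0 -(abelem2E [set: 'S_3]%G).
  by apply: contra S3_nonabelian; apply: abelem_abelian.
have M_le2 : (#|elts_order_gt 2 [set: 'S_3]| <= 2)%N.
  have sMA : elts_order_gt 2 [set: 'S_3] \subset 'Alt_('I_3) :\ 1.
    apply/subsetP => x /setIdP[_ lt2x].
    have ox : #[x] = 3%N by apply/eqP; rewrite eqn_leq order_S3_le3.
    rewrite in_setD1 -order_eq1 ox Alt_even /=.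
    have := congr1 (@odd_perm _) (expg_order x).
    by rewrite ox expgS expg2 !odd_permM odd_perm1 addbb addbF => ->.
  apply: leq_trans (subset_leq_card sMA) _.
  have := card_Alt (T := 'I_3); rewrite card_ord (cardsD1 1) group1 => /(_ isT).
  by rewrite (_ : 3`! = 6)%N //=; move: #|_| => a; lia.
by move: M_gt0 M_le2 (even_card_elts_order_gt2 [set: 'S_3]%G); case: #|_| => [|[|[|]]].
Qed.

Lemma psi_S3 : psi [set: 'S_3] = 13%N.
Proof.
have K0 : elts_order_gt 3 [set: 'S_3] = set0.
  by apply/setP => x; rewrite !inE ltnNge order_S3_le3.
have le4 : [forall x in [set: 'S_3], #[x] <= 4]%N.
  by apply/forall_inP => x _; rewrite (leq_trans (order_S3_le3 x)).
move: (eq_leqif (psi_leqif [set: 'S_3]%G)); rewrite le4 /= K0 cards0.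
by rewrite card_elts_order_gt2_S3 card_S3 => /eqP[].
Qed.

End SymmetricGroup3.

Lemma isog_S3_of_card_elts_order_gt2 (gT : finGroupType) (G : {group gT}) :
  #|G| = 6%N -> #|elts_order_gt 2 G| = 2%N -> G \isog [set: 'S_3].
Proof.
move=> oG oM.
have : (1 < #|[set x in G | x ^+ 2 == 1%g] :\ 1%g|)%N.
  have := card_elts_order_gt2_sqrt1 G.
  by rewrite oG oM (cardsD1 1) inE group1 expg1n eqxx; move: #|_ :\ _| => c; lia.
case/card_gt1P => a [b [/setD1P[a1 /setIdP[Ga a2]] /setD1P[b1 /setIdP[Gb b2]] ab]].
have order2 (x : gT) : x != 1 -> x ^+ 2 == 1 -> #[x] = 2%N.
  by move=> x1 x2; apply/eqP; rewrite eqn_leq order_le2 x2 order_gt1.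
have := isog_D6_of_involutions oG Ga Gb (order2 _ a1 a2) (order2 _ b1 b2) ab.
by move/isog_trans; apply; rewrite isog_sym S3_isog_D6.
Qed.

Import GRing.Theory Num.Theory.
Local Open Scope ring_scope.

Lemma avg_order_ltE (gT : finGroupType) (G : {group gT}) (c d : nat) :
  (0 < d)%N -> (avg_order G < c%:R / d%:R) = (psi G * d < c * #|G|)%N.
Proof.
move=> d_gt0; rewrite /avg_order ltr_pdivrMr ?ltr0n // mulrAC.
by rewrite ltr_pdivlMr ?ltr0n ?cardG_gt0 // -!natrM ltr_nat.
Qed.

Lemma avg_order_eqE (gT : finGroupType) (G : {group gT}) (c d : nat) :
  (0 < d)%N -> (avg_order G == c%:R / d%:R) = (psi G * d == c * #|G|)%N.
Proof.
move=> d_gt0; rewrite /avg_order eqr_div ?pnatr_eq0 -?lt0n ?cardG_gt0 //.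
by rewrite -!natrM eqr_nat.
Qed.

Theorem theoremA :
  (forall (gT : finGroupType) (G : {group gT}),
     avg_order G < avg_order [set: 'S_3] -> (2.-abelem G)%g) /\
  avg_order [set: 'S_3] = 13%:R / 6%:R /\
  (forall (gT : finGroupType) (G : {group gT}),
     avg_order G = 13%:R / 6%:R -> (G \isog [set: 'S_3])%g).
Proof.
have avg_S3 : avg_order [set: 'S_3] = 13%:R / 6%:R by rewrite /avg_order psi_S3 card_S3.
split; [|split=> //].
  move=> gT G; rewrite avg_S3 avg_order_ltE // => lt_psi.
  by apply/negPn/negP => /psi_nonabelem2[le_psi _]; lia.
move=> gT G /eqP; rewrite avg_order_eqE // => /eqP eq_psi.
have [abG | nabG] := boolP (2.-abelem G).
  by have := psi_abelem2 abG; have := cardG_gt0 G; lia.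
have [_ eq_case] := psi_nonabelem2 nabG.
have [|oG oM _] := eq_case; first lia.
exact: isog_S3_of_card_elts_order_gt2.
Qed.
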